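(* Let $p$ be an odd prime, $q=p^e$ with $e\ge 1$, and let $k$ be an integer with $1\le k\le e$. Then $F_{p^k}(1,x)$ is a permutation polynomial of $\mathbb{F}_q$ if and only if $\gcd\!\left(\frac{p^k-1}{2},\,q-1\right)=1$.
   Context: For an integer $n\ge 1$, the $n$-th reversed Dickson polynomial of the third kind is $F_n(a,x)=\sum_{i=0}^{\lfloor n/2\rfloor}\frac{n-2i}{n-i}\binom{n-i}{i}(-x)^i a^{n-2i}$, where each coefficient $\frac{n-2i}{n-i}\binom{n-i}{i}$ is an integer (read in $\mathbb{F}_q$), and $F_0(a,x)=0$. A polynomial $f\in\mathbb{F}_q[x]$ is a permutation polynomial of $\mathbb{F}_q$ if $c\mapsto f(c)$ is a bijection of $\mathbb{F}_q$. *)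

From HB Require Import structures.
From mathcomp Require Import all_boot all_order all_algebra all_field.
Set Implicit Arguments. Unset Strict Implicit. Unset Printing Implicit Defensive.
Import GRing.Theory.
Local Open Scope ring_scope.

(* The integer coefficient (n-2i)/(n-i) * C(n-i,i), computed as an exact
   natural-number division (for 0 <= i <= n/2 and n >= 1 it is exact;
   for n = 0 it evaluates to 0). *)
Definition rd3_coef (n i : nat) : nat :=
  ((n - i.*2) * 'C(n - i, i)) %/ (n - i).

Definition rdickson3 (R : comNzRingType) (n : nat) (a : R) : {poly R} :=
  if n == 0%N then 0 else
  \sum_(i < n./2.+1)
     ((rd3_coef n i)%:R * a ^+ (n - i.*2)) *: (- 'X) ^+ i.

Definition perm_poly (F : finFieldType) (f : {poly F}) : Prop :=
  bijective (fun c : F => f.[c]).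

From HB Require Import structures.
From mathcomp Require Import all_boot all_order all_algebra all_field all_fingroup all_solvable.
From mathcomp Require Import zify ring.

(* F_n(1, x) = E_(n-1)(1, x), where E_m(1, x) is the reversed Dickson polynomial
   of the second kind, read off from the (m+1)-st power of M = [[1, -x], [1, 0]].
   Since 2M = 1 + P with P^2 = (1 - 4x) I, raising to the power p^k in
   characteristic p gives 2^(p^k) M^(p^k) = 1 + P^(p^k), hence
   E_(p^k-1)(1, x) = (1 - 4x)^((p^k-1)/2).  An affine change of variable then
   reduces the permutation property to that of x^m, m = (p^k-1)/2, which
   permutes F_q exactly when gcd(m, q-1) = 1. *)
Set Implicit Arguments.
Unset Strict Implicit.
Unset Printing Implicit Defensive.

Import GRing.Theory.
Local Open Scope ring_scope.

Lemma rd3_coefE n i : (0 < n)%N -> rd3_coef n i = 'C(n.-1 - i, i).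
Proof.
rewrite /rd3_coef => n_gt0.
have -> : (n - i.*2 = (n - i) - i)%N by rewrite -addnn subnDA.
rewrite -mul_bin_down.
have [ni0|ni_gt0] := posnP (n - i).
  by rewrite ni0 mul0n div0n (_ : n.-1 - i = 0)%N ?bin0n; lia.
by rewrite mulKn //; congr 'C(_, _); lia.
Qed.

Lemma sum_scale_oppX (R : comNzRingType) N (c : nat -> R) :
  \sum_(i < N) c i *: (- 'X) ^+ i = \poly_(i < N) (c i * (-1) ^+ i).
Proof.
by rewrite poly_def; apply: eq_bigr => i _; rewrite -scaleN1r exprZn scalerA.
Qed.

(* E_n(1, x); the terms with 2i > n vanish, so the sum may run up to n. *)
Definition rdickson2 (R : comNzRingType) n : {poly R} :=
  \sum_(i < n.+1) 'C(n - i, i)%:R *: (- 'X) ^+ i.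

Lemma coef_rdickson2 (R : comNzRingType) n j :
  (rdickson2 R n)`_j = 'C(n - j, j)%:R * (-1) ^+ j.
Proof.
rewrite /rdickson2 (sum_scale_oppX _ (fun i => 'C(n - i, i)%:R)) coef_poly ltnS.
case: leqP => // n_lt_j; have -> : (n - j = 0)%N by lia.
by rewrite bin0n; case: j n_lt_j => // j _; rewrite mul0r.
Qed.

Lemma rdickson2SS (R : comNzRingType) n :
  rdickson2 R n.+2 = rdickson2 R n.+1 - 'X * rdickson2 R n.
Proof.
apply/polyP => -[|j]; rewrite coefB coefXM !coef_rdickson2 /=.
  by rewrite !bin0 subr0.
suff -> : 'C(n.+2 - j.+1, j.+1) = ('C(n.+1 - j.+1, j.+1) + 'C(n - j, j))%N.
  by rewrite natrD exprS; ring.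
have [j_le_n|n_lt_j] := leqP j n.
  by rewrite !subSS subSn // binS addnC.
rewrite !subSS; have [-> ->] : (n.+1 - j = 0 /\ n - j = 0)%N by lia.
by rewrite !bin0n; case: j n_lt_j.
Qed.

Lemma rdickson3_1E (R : comNzRingType) n : (0 < n)%N ->
  rdickson3 n (1 : R) = rdickson2 R n.-1.
Proof.
move=> n_gt0; rewrite /rdickson3 gtn_eqF //.
under eq_bigr => i _ do rewrite expr1n mulr1.
apply/polyP => j.
rewrite (sum_scale_oppX _ (fun i => (rd3_coef n i)%:R)) coef_poly.
rewrite coef_rdickson2 rd3_coefE //.
case: ltnP => // half_lt_j.
by rewrite bin_small ?mul0r //; have := odd_double_half n; lia.
Qed.

Lemma exprD_pchar_comm (R : nzRingType) p k (x y : R) :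
  p \in [pchar R] -> GRing.comm x y ->
  (x + y) ^+ (p ^ k) = x ^+ (p ^ k) + y ^+ (p ^ k).
Proof.
move=> pcharRp cxy; elim: k => [|k IHk]; first by rewrite !expr1.
rewrite expnSr !exprM IHk -!(pFrobenius_autE pcharRp) pFrobenius_autD_comm //.
exact/commrX/commr_sym/commrX/commr_sym.
Qed.

Lemma natr_exp_pchar (R : nzRingType) p k n :
  p \in [pchar R] -> n%:R ^+ (p ^ k) = n%:R :> R.
Proof.
move=> pcharRp; elim: k => [|k IHk]; first by rewrite expr1.
by rewrite expnSr exprM IHk -(pFrobenius_autE pcharRp) pFrobenius_aut_nat.
Qed.

Lemma pchar_mx (R : nzRingType) n p :
  p \in [pchar R] -> p \in [pchar 'M[R]_n.+1].
Proof.
case/andP=> p_prime /eqP p0; rewrite inE p_prime /=.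
by rewrite -(rmorph_nat (@scalar_mx R n.+1)) p0 raddf0.
Qed.

Lemma mulmx2E (R : nzRingType) (A B : 'M[R]_2) i j :
  (A * B) i j = A i ord0 * B ord0 j + A i ord_max * B ord_max j.
Proof.
rewrite -mulmxE mxE !big_ord_recl big_ord0 addr0.
by congr (_ + A i _ * B _ j); apply: val_inj.
Qed.

Section DicksonMatrix.
Variable R : comNzRingType.

Definition rdickson2_mx : 'M[{poly R}]_2 :=
  \matrix_(i, j) if i == ord0 then (if j == ord0 then 1 else - 'X)
                 else (if j == ord0 then 1 else 0).

Lemma rdickson2_mx_pow n :
  (rdickson2_mx ^+ n.+1) ord_max ord0 = rdickson2 R n /\
  (rdickson2_mx ^+ n.+1) ord0 ord0 = rdickson2 R n.+1.
Proof.
elim: n => [|n [IH1 IH0]].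
  rewrite expr1 !mxE /rdickson2 !big_ord_recl !big_ord0 /= bin0n.
  by split; rewrite ?scale0r scale1r !addr0.
by rewrite exprS !mulmx2E IH1 IH0 !mxE /= rdickson2SS; split; ring.
Qed.

End DicksonMatrix.

Lemma rdickson2_pchar (R : idomainType) p k :
  p \in [pchar R] -> odd p ->
  rdickson2 R (p ^ k).-1 = (1 - 4%:R * 'X) ^+ (p ^ k)./2.
Proof.
move=> pcharRp odd_p; set n := (p ^ k)%N; set m := n./2.
have pcharPp : p \in [pchar {poly R}] by rewrite pchar_poly.
have n_odd : odd n by rewrite oddX odd_p orbT.
have nE : n = m.*2.+1 by rewrite odd_halfK // prednK // odd_gt0.
have two_neq0 : 2%:R != 0 :> {poly R}.
  rewrite -(dvdn_pcharf pcharPp) dvdn_prime2 ?(pcharf_prime pcharRp) //.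
  by apply: contraTneq odd_p => ->.
pose c : {poly R} := 1 - 4%:R * 'X.
pose P : 'M[{poly R}]_2 :=
  \matrix_(i, j) if i == ord0 then (if j == ord0 then 1 else - (2%:R * 'X))
                 else (if j == ord0 then 2%:R else -1).
have scaleM : 2%:R *: rdickson2_mx R = 1 + P.
  apply/matrixP => i j; rewrite !mxE.
  by case: i j => [[|[|?]] ?] [[|[|?]] ?] //=; ring.
have sqrP : P * P = c%:M.
  apply/matrixP => i j; rewrite mulmx2E !mxE.
  by case: i j => [[|[|?]] ?] [[|[|?]] ?] //=; rewrite /c; ring.
have expP : P ^+ n = P * (c ^+ m)%:M.
  by rewrite nE exprS -mul2n exprM expr2 sqrP -rmorphXn.
have := congr1 (fun A : 'M_2 => (A ^+ n) ord_max ord0) scaleM.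
rewrite /= exprZn natr_exp_pchar // exprD_pchar_comm ?pchar_mx //; last first.
  exact/commr_sym/commr1.
rewrite expP expr1n -mulmxE mul_mx_scalar !mxE /= add0r nE.
by rewrite (rdickson2_mx_pow R m.*2).1 [_ * 2]mulrC => /(mulfI two_neq0).
Qed.

Section FinFieldPower.
Variable F : finFieldType.

Lemma expf_card_predM (x : F) v : x ^+ (v * #|F|.-1).+1 = x.
Proof.
elim: v => [|v IHv]; first by rewrite expr1.
rewrite mulSn addnC -addnS prednK ?(ltnW (finNzRing_gt1 F)) //.
by rewrite exprD expf_card -exprSr IHv.
Qed.

Lemma exprn_inj_coprime m :
  (0 < m)%N -> coprime m #|F|.-1 -> injective (fun x : F => x ^+ m).
Proof.
move=> m_gt0 /eqnP co_m; case: (egcdnP #|F|.-1 m_gt0) => u v uE _.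
apply: (can_inj (g := fun y => y ^+ u)) => x /=.
by rewrite -exprM mulnC uE co_m addn1 expf_card_predM.
Qed.

Lemma coprime_exprn_inj m :
  injective (fun x : F => x ^+ m) -> coprime m #|F|.-1.
Proof.
move=> inj_m; rewrite -card_finField_unit; apply: contraT => not_co.
set g := gcdn m #|[set: {unit F}]|.
have g_gt1 : (1 < g)%N.
  by rewrite ltn_neqAle eq_sym not_co gcdn_gt0 cardG_gt0 orbT.
have [u _ ord_u] :=
  Cauchy (pdiv_prime g_gt1) (dvdn_trans (pdiv_dvd g) (dvdn_gcdr _ _)).
have um : (u ^+ m = 1)%g.
  by apply/eqP; rewrite -order_dvdn ord_u (dvdn_trans (pdiv_dvd g) (dvdn_gcdl _ _)).
have u1 : u = 1%g.
  by apply/val_inj/inj_m; rewrite /= -FinRing.val_unitX um expr1n.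
by move: (pdiv_prime g_gt1); rewrite -ord_u u1 order1.
Qed.

End FinFieldPower.

Lemma bij_affine_comp (F : finFieldType) (g : F -> F) a b : b != 0 ->
  bijective (fun c => g (a + b * c)) <-> injective g.
Proof.
move=> b_neq0.
have affK : cancel (fun c => a + b * c) (fun y => (y - a) / b).
  by move=> c; rewrite addrC addKr mulrC mulKf.
have affVK : cancel (fun y => (y - a) / b) (fun c => a + b * c).
  by move=> y; rewrite mulrC divfK // addrC subrK.
split=> [/bij_inj inj_ga | inj_g]; last first.
  by apply: injF_bij; exact: inj_comp inj_g (can_inj affK).
by apply: eq_inj (inj_comp inj_ga (can_inj affVK)) _ => y /=; rewrite affVK.
Qed.

Theorem theorem2p6 (p e k : nat) (F : finFieldType) :
  prime p -> odd p -> (0 < e)%N -> #|F| = (p ^ e)%N ->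
  (1 <= k <= e)%N ->
  (perm_poly (rdickson3 (p ^ k) (1 : F)) <->
   gcdn ((p ^ k - 1) %/ 2) (p ^ e - 1) = 1%N).
Proof.
move=> p_prime odd_p _ cardF /andP[k_gt0 _].
have pcharFp : p \in [pchar F] := card_finPcharP cardF p_prime.
have odd_pk : odd (p ^ k) by rewrite oddX odd_p orbT.
set m := (p ^ k)./2.
have m_gt0 : (0 < m)%N.
  rewrite half_gt0 (leq_trans (prime_gt1 p_prime)) //.
  by rewrite -{1}[p]expn1 leq_pexp2l // prime_gt0.
have -> : ((p ^ k - 1) %/ 2 = m)%N by rewrite subn1 divn2 -odd_halfK ?doubleK.
have -> : (p ^ e - 1 = #|F|.-1)%N by rewrite cardF subn1.
have four_neq0 : 4%:R != 0 :> F.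
  rewrite -(dvdn_pcharf pcharFp) (_ : 4 = 2 ^ 2)%N // Euclid_dvdX // andbT.
  by rewrite dvdn_prime2 //; apply: contraTneq odd_p => ->.
rewrite rdickson3_1E ?expn_gt0 ?prime_gt0 // rdickson2_pchar //.
transitivity (bijective (fun c : F => (1 + - 4%:R * c) ^+ m)).
  split=> /eq_bij; apply=> c;
    by rewrite horner_exp -polyC_natr hornerD hornerN hornerCM hornerX hornerC mulNr.
apply: iff_trans (bij_affine_comp (fun x : F => x ^+ m) 1 (_ : - 4%:R != 0)) _.
  by rewrite oppr_eq0.
split=> [/coprime_exprn_inj/eqP // | /eqP]; exact: exprn_inj_coprime.
Qed.
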